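(* Let $(D,D^* )$ be a pair of dual cellular dissections of a marked surface. Then the bound quiver $\bar Q_D=(Q_D,I_D)$ is a locally gentle bound quiver.
   Context: A marked surface $(\mathcal S,V\sqcup V^* )$ is an oriented surface with boundary with disjoint finite sets $V,V^*$ of marked points whose points on the boundary alternate. A $V$-dissection $D$ is a set of pairwise non-crossing arcs (up to homotopy, in minimal position) joining points of $V$; its edges are its arcs and the boundary arcs; it is cellular if the components of the complement of its edges (faces) are disks. $D$ and a cellular $V^*$-dissection $D^*$ are dual if there are mutually inverse bijections $V^*\leftrightarrow$ faces of $D$, $V\leftrightarrow$ faces of $D^*$ ($x\mapsto x^*$) with: $D$ has an edge joining $u,v$ separating faces $f,g$ iff $D^*$ has an edge joining $f^*,g^*$ separating $u^*,v^*$. The bound quiver $\bar Q_D=(Q_D,I_D)$: vertices are the arcs of $D$; there is an arrow $a\to b$ for each common endpoint $v$ of $a$ and $b$ such that $b$ comes immediately after $a$ in the counterclockwise order around $v$; $I_D$ is the ideal generated by the paths of length two corresponding to triples of consecutive edges in a face of $D$. A bound quiver $(Q,I)$ ($Q$ finite, $I$ an ideal of $kQ$ generated by linear combinations of paths of length $\ge2$, $kQ/I$ possibly infinite-dimensional) is locally gentle if each vertex has at most two incoming and two outgoing arrows, $I$ is generated by paths of length two, and for each arrow $\beta$ there is at most one $\alpha$ with $t(\alpha)=s(\beta)$, $\alpha\beta\notin I$, at most one with $t(\alpha)=s(\beta)$, $\alpha\beta\in I$, at most one $\gamma$ with $t(\beta)=s(\gamma)$, $\beta\gamma\notin I$, and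 at most one with $t(\beta)=s(\gamma)$, $\beta\gamma\in I$. *)

From HB Require Import structures.
From mathcomp Require Import all_boot all_order all_algebra all_fingroup.
Set Implicit Arguments. Unset Strict Implicit. Unset Printing Implicit Defensive.
Import GRing.Theory.

Record quiver := Quiver {
  qv : finType;
  qa : finType;
  qs : qa -> qv;
  qt : qa -> qv
}.

(* A bound quiver (Q, I) where I is the two-sided ideal of kQ generated by
   the set of length-two paths  [:: a; b]  with  brel a b. *)
Record bquiver := BQuiver {
  bq :> quiver;
  brel : qa bq -> qa bq -> bool
}.

(* Paths are written left to right: a path a_1 a_2 ... a_n has
   t(a_i) = s(a_{i+1}).  Non-trivial paths are nonempty sequences. *)
Definition is_path (Q : quiver) (p : seq (qa Q)) : bool :=
  sorted (fun a b => qt a == qs b) p.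

(* A generating term  c * u r v  of the ideal: u, v paths (possibly trivial,
   i.e. empty), r = [:: r1; r2] a generator, and u r v a genuine path. *)
Definition gen_term (B : bquiver) (k : Type) :=
  (k * (seq (qa B) * (qa B * qa B) * seq (qa B)))%type.

Definition gt_path (B : bquiver) (k : Type) (t : gen_term B k) : seq (qa B) :=
  let: (_, (u, (r1, r2), v)) := t in u ++ [:: r1; r2] ++ v.

Definition gt_ok (B : bquiver) (k : Type) (t : gen_term B k) : bool :=
  let: (_, (u, (r1, r2), v)) := t in brel r1 r2 && is_path (u ++ [:: r1; r2] ++ v).

(* The path p (a basis element of kQ) lies in the ideal I generated by the
   relations: p = sum_i c_i u_i r_i v_i in kQ, i.e. the coefficients of both
   sides agree on every path q. *)
Definition path_in_ideal (k : fieldType) (B : bquiver) (p : seq (qa B)) : Prop :=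
  exists L : seq (gen_term B k),
    all (@gt_ok B k) L /\
    forall q : seq (qa B),
      ((q == p)%:R : k)%R = (\sum_(t <- L | gt_path t == q) t.1)%R.

Definition locally_gentle (k : fieldType) (B : bquiver) : Prop :=
  let inI a b := path_in_ideal k (B := B) [:: a; b] in
  (* I is generated by paths of length two (genuine paths) *)
  (forall a b : qa B, brel a b -> qt a = qs b) /\
  (forall v : qv B, #|[set a | qt a == v]| <= 2 /\ #|[set a | qs a == v]| <= 2) /\
  (forall b : qa B,
     (forall a1 a2 : qa B, qt a1 = qs b -> qt a2 = qs b ->
        ~ inI a1 b -> ~ inI a2 b -> a1 = a2) /\
     (forall a1 a2 : qa B, qt a1 = qs b -> qt a2 = qs b ->
        inI a1 b -> inI a2 b -> a1 = a2) /\
     (forall c1 c2 : qa B, qt b = qs c1 -> qt b = qs c2 ->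
        ~ inI b c1 -> ~ inI b c2 -> c1 = c2) /\
     (forall c1 c2 : qa B, qt b = qs c1 -> qt b = qs c2 ->
        inI b c1 -> inI b c2 -> c1 = c2)).

(* The surface S is capped off: each boundary component is glued to a disk  *)
(* ("cap").  The graph formed by the arcs of D and the boundary arcs is     *)
(* cellularly embedded in the capped closed oriented surface, hence given   *)
(* by a combinatorial map on a finite set H of darts (half-edges):          *)
(*   al  : the fixed-point-free involution exchanging the two darts of an   *)
(*         edge;                                                            *)
(*   sg  : the rotation sending a dart at a vertex v to the next dart at v  *)
(*         in counterclockwise order (vertices = V = sg-orbits);            *)
(*   the corner between the darts h and sg h at a vertex lies in the face   *)
(*   traced by  phi := sg \o al  containing  sg h; faces = phi-orbits;      *)
(*   capd : the darts whose face is a cap (a boundary component).           *)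
(* Boundary arcs are the edges with one (cap) side; arcs of D are the edges *)
(* with no side in a cap.  The points of V^* are: one point on each         *)
(* boundary arc (alternation of V and V^* on the boundary) and the interior *)
(* points p : P, lying in the face of the dart  loc p.                      *)

Section Dissection.
Variables (H : finType) (al : H -> H) (sg : {perm H}) (capd : pred H).

Definition phi (h : H) : H := sg (al h).
Definition same_face (h h' : H) : bool := fconnect phi h h'.
Definition same_vertex (h h' : H) : bool := fconnect sg h h'.

Definition is_arc (h : H) : bool := ~~ capd h && ~~ capd (al h).

Definition arcset (h : H) : {set H} := [set h; al h].

Definition is_arc_set (A : {set H}) : bool := [exists h, is_arc h && (A == arcset h)].

Lemma arcset_is_arc_set h : is_arc h -> is_arc_set (arcset h).
Proof. by move=> Ha; apply/existsP; exists h; rewrite Ha eqxx. Qed.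

Definition QD0 : finType := {A : {set H} | is_arc_set A}.
(* arrows of Q_D: corners (h, sg h) at a vertex between two arcs;
   arrow from the arc of h to the arc of sg h (the next one ccw). *)
Definition QD1 : finType := {h : H | is_arc h && is_arc (sg h)}.

Definition QDs (a : QD1) : QD0 :=
  Sub (arcset (val a)) (arcset_is_arc_set (andP (valP a)).1).
Definition QDt (a : QD1) : QD0 :=
  Sub (arcset (sg (val a))) (arcset_is_arc_set (andP (valP a)).2).

(* relation: the corners of a and b are consecutive corners of a face, i.e.
   the arcs of (a, b) form three consecutive edges of a face of D. *)
Definition QDrel (a b : QD1) : bool := al (sg (val a)) == val b.

Definition QD : bquiver := @BQuiver (@Quiver QD0 QD1 QDs QDt) QDrel.

Definition dual_cellular_dissection (P : finType) (loc : P -> H) : Prop :=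
  (forall h, al (al h) = h) /\ (forall h, al h != h) /\
  (forall h h', connect (fun x y => (y == sg x) || (y == al x)) h h') /\
  (* caps are unions of faces; no edge has caps on both sides *)
  (forall h, capd (phi h) = capd h) /\ (forall h, ~~ (capd h && capd (al h))) /\
  (* a marked point lies on at most one boundary component, and only once *)
  (forall h h', capd h -> capd h' -> same_vertex h h' -> h = h') /\
  (forall p, ~~ capd (loc p)) /\
  (* duality: each face of D contains exactly one point of V^*
     (boundary points of V^* on its boundary arcs, or interior ones) *)
  (forall h, ~~ capd h ->
     #|[set x | same_face h x & capd (al x)]|
     + #|[set p | same_face h (loc p)]| = 1).

End Dissection.

From mathcomp Require Import all_boot all_order all_algebra all_fingroup.
Set Implicit Arguments. Unset Strict Implicit. Unset Printing Implicit Defensive.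
Import GRing.Theory.

(* I_D is generated by paths of length two, so [a; b] lies in I_D exactly
   when (a, b) is one of the generating relations.  An arrow is a corner
   (h, sg h); an arrow b leaving the arc {h, al h} is preceded without
   relation only by the corner ending at val b (the previous corner around
   the same vertex) and with relation only by the corner ending at
   al (val b) (the previous corner of the face).  As sg is a permutation and
   al an involution, these predecessors, and dually the successors, are
   unique; and at most two arrows start or end at an arc since it has two
   darts. *)

Section LengthTwoRelations.
Variables (k : fieldType) (B : bquiver).

(* A generator term u r v of length two has u = v = [::], so if (a, b) is
   not a relation the coefficient of [a; b] in any combination is 0, not 1. *)
Lemma path_in_ideal2_rel (a b : qa B) : path_in_ideal k [:: a; b] -> brel a b.
Proof.
case=> L [L_ok L_sum]; move: (L_sum [:: a; b]); rewrite eqxx.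
move=> one_sum; apply/negPn/negP => not_rel; move: (oner_neq0 k).
rewrite -[1%R]mulr1n one_sum big1_seq ?eqxx //.
move=> [c [[u [r1 r2]] v]] /andP[/eqP /= def_ab tL].
have /andP[r12 _] := allP L_ok _ tL.
case: u def_ab {tL} => [|x u] /=.
  2: by move/(congr1 size) => /=; rewrite size_cat !addnS.
case: v => [|x v] //= [def_a def_b].
by move: r12; rewrite def_a def_b (negbTE not_rel).
Qed.

Lemma rel_path_in_ideal2 (a b : qa B) :
  brel a b -> qt a = qs b -> path_in_ideal k [:: a; b].
Proof.
move=> ab tab; exists [:: (1%R, ([::], (a, b), [::]))]; split.
  by rewrite /= ab /is_path /= tab eqxx.
move=> q; rewrite big_cons big_nil addr0 /= eq_sym.
by case: eqP.
Qed.

Hypothesis rel_composable : forall a b : qa B, brel a b -> qt a = qs b.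

Lemma path_in_ideal2P (a b : qa B) : path_in_ideal k [:: a; b] <-> brel a b.
Proof.
split; first exact: path_in_ideal2_rel.
by move=> ab; apply: rel_path_in_ideal2 (rel_composable ab).
Qed.

Definition gentle_rel : Prop :=
  forall b : qa B,
  [/\ forall a1 a2, qt a1 = qs b -> qt a2 = qs b ->
        ~~ brel a1 b -> ~~ brel a2 b -> a1 = a2,
      forall a1 a2, brel a1 b -> brel a2 b -> a1 = a2,
      forall c1 c2, qt b = qs c1 -> qt b = qs c2 ->
        ~~ brel b c1 -> ~~ brel b c2 -> c1 = c2 &
      forall c1 c2, brel b c1 -> brel b c2 -> c1 = c2].

Lemma locally_gentle_rel :
  (forall v : qv B,
     #|[set a | qt a == v]| <= 2 /\ #|[set a | qs a == v]| <= 2) ->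
  gentle_rel -> locally_gentle k B.
Proof.
move=> deg gentle; split=> //; split=> // b.
have [in_nonrel in_rel out_nonrel out_rel] := gentle b.
have notI (x y : qa B) : ~ path_in_ideal k [:: x; y] -> ~~ brel x y.
  by move=> xyNI; apply/negP => xy; apply/xyNI/path_in_ideal2P.
split; last split; last split.
- by move=> a1 a2 tab1 tab2 /notI ab1 /notI; apply: in_nonrel.
- by move=> a1 a2 _ _ /path_in_ideal2P ab1 /path_in_ideal2P; apply: in_rel.
- by move=> c1 c2 tbc1 tbc2 /notI bc1 /notI; apply: out_nonrel.
- by move=> c1 c2 _ _ /path_in_ideal2P bc1 /path_in_ideal2P; apply: out_rel.
Qed.

End LengthTwoRelations.

Section DissectionQuiver.
Variables (H : finType) (al : H -> H) (sg : {perm H}) (capd : pred H).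
Hypothesis alK : involutive al.

Local Notation arcset := (arcset al).
Local Notation QD := (QD al sg capd).

Lemma arcset_al (h : H) : arcset (al h) = arcset h.
Proof. by apply/setP=> z; rewrite !inE alK orbC. Qed.

Lemma eq_arcset (h h' : H) : arcset h = arcset h' -> h' = h \/ h' = al h.
Proof.
move=> E; have : h' \in arcset h' by rewrite !inE eqxx.
by rewrite -E !inE => /orP[] /eqP ->; [left | right].
Qed.

Lemma card_QD0 (v : qv QD) : #|val v| <= 2.
Proof.
have /existsP[h /andP[_ /eqP ->]] := valP v.
by rewrite cards2; case: (_ != _).
Qed.

Lemma card_QD_in (v : qv QD) : #|[set a | qt a == v]| <= 2.
Proof.
have sg_val_inj : injective (fun a : qa QD => sg (val a)).
  by move=> a a' /perm_inj /val_inj.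
rewrite -(card_imset _ sg_val_inj); apply: leq_trans (card_QD0 v).
apply/subset_leq_card/subsetP => z /imsetP[a]; rewrite inE => /eqP <- ->.
by rewrite !inE eqxx.
Qed.

Lemma card_QD_out (v : qv QD) : #|[set a | qs a == v]| <= 2.
Proof.
rewrite -(card_imset _ val_inj); apply: leq_trans (card_QD0 v).
apply/subset_leq_card/subsetP => z /imsetP[a]; rewrite inE => /eqP <- ->.
by rewrite !inE eqxx.
Qed.

Lemma QD_rel_composable (a b : qa QD) : brel a b -> qt a = qs b.
Proof. by move=> /eqP ab; apply: val_inj; rewrite /= -ab arcset_al. Qed.

Lemma QD_in_nonrel (a b : qa QD) :
  qt a = qs b -> ~~ brel a b -> sg (val a) = val b.
Proof.
move=> /(congr1 val) /eq_arcset [-> // | def_b].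
by rewrite /= /QDrel def_b eqxx.
Qed.

Lemma QD_out_nonrel (b c : qa QD) :
  qt b = qs c -> ~~ brel b c -> val c = sg (val b).
Proof.
move=> /(congr1 val) /eq_arcset [-> // | def_c].
by rewrite /= /QDrel def_c eqxx.
Qed.

Lemma gentle_rel_QD : gentle_rel QD.
Proof.
move=> b; split.
- move=> a1 a2 tab1 tab2 /(QD_in_nonrel tab1) ab1 /(QD_in_nonrel tab2).
  by rewrite -ab1 => /perm_inj /val_inj ->.
- move=> a1 a2 /eqP ab1 /eqP; rewrite -ab1.
  by move=> /(can_inj alK) /perm_inj /val_inj ->.
- move=> c1 c2 tbc1 tbc2 /(QD_out_nonrel tbc1) bc1 /(QD_out_nonrel tbc2).
  by rewrite -bc1 => /val_inj.
- by move=> c1 c2 /eqP bc1 /eqP; rewrite bc1 => /val_inj.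
Qed.

End DissectionQuiver.

Theorem lemma4p3 (H : finType) (al : H -> H) (sg : {perm H}) (capd : pred H)
    (P : finType) (loc : P -> H) (k : fieldType) :
  dual_cellular_dissection al sg capd loc ->
  locally_gentle k (QD al sg capd).
Proof.
case=> alK _.
apply: locally_gentle_rel.
- exact: QD_rel_composable.
- by move=> v; split; [apply: card_QD_in | apply: card_QD_out].
- exact: gentle_rel_QD.
Qed.
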